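(* Consider the atomic model under the Shapley scheme with one large player of stake $a$ and all other players of stake $1$, and a $(k,l)$-partition with $k<h$. If $k\le h-2$, the partition is a Nash equilibrium provided that (1) $\frac{k(k+1)}{h-a}\le l\le\frac{(k+1)(k+2)}{h-a}$ and (2) $l\ge\frac{a(k+1)}{k-h+a+1}$. If $k=h-1$, the same conclusion holds with the upper bound in (1) replaced by $l\le\frac{(k+1)(k+2)}{h+1-a}=\frac{h(h+1)}{h+1-a}$.
   Context: Atomic model with threshold $h$: one player has stake $a$ (the large player) and all others stake $1$ (small players), where $h,a$ are integers with $2\le a\le h-1$. Pools partition the players; a pool $S$ has reward $\rho(S)=1$ if its total stake is at least $h$ and $0$ otherwise. Shapley scheme: player $i$ in pool $S$ receives $\phi_i(S)=\sum_{T\subseteq S\setminus\{i\}}\frac{|T|!(|S|-|T|-1)!}{|S|!}(\rho(T\cup\{i\})-\rho(T))$. A partition into winning pools is a Nash equilibrium if no player can strictly increase her payment by moving to another pool of the partition or opening a new pool alone. For integers $k,l$ with $k+a\ge h$ and $l\ge h+1$, a $(k,l)$-partition is a partition consisting only of pools of the following types (not necessarily all present): Type A: exactly one large player and $k$ small players; Type B: $l$ small players; Type C: $l-1$ small players. *)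

From mathcomp Require Import all_boot all_order all_algebra.
Set Implicit Arguments. Unset Strict Implicit. Unset Printing Implicit Defensive.
Import Order.TTheory GRing.Theory Num.Theory.
Local Open Scope ring_scope.

Section Model.
Variables (T : finType) (w : T -> nat) (h : nat).

Definition rho (S : {set T}) : rat :=
  if (h <= \sum_(i in S) w i)%N then 1 else 0.

Definition shapley (S : {set T}) (i : T) : rat :=
  \sum_(U in powerset (S :\ i))
     ((#|U|`! * (#|S| - #|U| - 1)`!)%:R / (#|S|`!)%:R) * (rho (i |: U) - rho U).

Definition nash_equilibrium (P : {set {set T}}) : Prop :=
  [/\ partition P [set: T],
      (forall S, S \in P -> rho S = 1) &
      forall i : T,
        (forall S', S' \in P -> i \notin S' ->
           shapley (i |: S') i <= shapley (pblock P i) i)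
        /\ shapley [set i] i <= shapley (pblock P i) i].
End Model.

Definition kl_partition (T : finType) (L : T) (k l : nat) (P : {set {set T}}) : Prop :=
  partition P [set: T] /\
  forall S, S \in P ->
    [|| (L \in S) && (#|S| == k.+1),
        (L \notin S) && (#|S| == l)
      | (L \notin S) && (#|S| == l.-1)].

From mathcomp Require Import all_boot all_order all_algebra zify ring.
Set Implicit Arguments. Unset Strict Implicit. Unset Printing Implicit Defensive.
Import Order.TTheory GRing.Theory Num.Theory.
Local Open Scope ring_scope.

(* In a pool where every player other than the large one has stake 1, the
   marginal contribution of a player to a coalition U depends only on |U| (and,
   for a small player, on whether U contains the large player).  Grouping the
   Shapley sum by |U| and counting with binomials yields closed forms: a small
   player in a winning pool of small players gets 1/|S|, the large player in a
   pool S gets ((|S| - (h - a)) - (|S| - h))/|S|, and a small player sharing a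
   pool S with the large player gets ((|S| - h) + (h - a))/((|S| - 1)|S|) when
   h - a < |S|.  Every deviation from a (k,l)-partition then compares two such
   fractions, and clearing denominators turns each comparison into one of the
   conditions (1), (2). *)

Section PowersetSums.
Variables (R : nmodType) (T : finType).

Lemma sum_powerset_card (A : {set T}) (F : nat -> R) :
  \sum_(U in powerset A) F #|U| = \sum_(j < #|A|.+1) F j *+ 'C(#|A|, j).
Proof.
rewrite (partition_big (fun U : {set T} => inord #|U| : 'I_#|A|.+1) predT) //=.
apply: eq_bigr => j _; rewrite -cards_draws -sumr_const.
apply: eq_big => [U|U /andP[]]; last first.
  by rewrite powersetE => /subset_leq_card UA /eqP <-; rewrite inordK.
rewrite !inE; case: (boolP (U \subset A)) => //= /subset_leq_card UA.
by rewrite -val_eqE /= inordK.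
Qed.

Lemma sum_powersetU1 (A : {set T}) x (F : {set T} -> R) : x \notin A ->
  \sum_(U in powerset (x |: A)) F U =
  \sum_(U in powerset A) F U + \sum_(U in powerset A) F (x |: U).
Proof.
move=> xA.
have subU1 (U : {set T}) : (U \subset x |: A) && (x \notin U) = (U \subset A).
  by rewrite -subsetD1 setU1K.
rewrite (bigID (fun U : {set T} => x \notin U)) /=; congr (_ + _).
  by apply: eq_bigl => U; rewrite !powersetE subU1.
rewrite (reindex_onto (fun U => x |: U) (fun U => U :\ x)) => [|U /andP[_ /negbNE]]; last first.
  exact: setD1K.
apply: eq_bigl => U; rewrite !powersetE -subU1 setU11 andbT subUset sub1set setU11 /=.
case: (boolP (x \in U)) => xU; last by rewrite setU1K ?eqxx.
by rewrite andbF; apply/negbTE; apply: contraL xU => /andP[_ /eqP <-]; rewrite setD11.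
Qed.

End PowersetSums.

Lemma eqr_div_nat (x y u v : nat) : (0 < y)%N -> (0 < v)%N ->
  (x * v = u * y)%N -> x%:R / y%:R = u%:R / v%:R :> rat.
Proof.
move=> y0 v0 E; apply/eqP; rewrite eqr_div ?pnatr_eq0 -?lt0n //.
by rewrite -!natrM E.
Qed.

Lemma ler_div_nat (x y u v : nat) : (0 < y)%N -> (0 < v)%N ->
  (x * v <= u * y)%N -> x%:R / y%:R <= u%:R / v%:R :> rat.
Proof.
move=> y0 v0 H.
by rewrite ler_pdivrMr ?ltr0n // mulrAC ler_pdivlMr ?ltr0n // -!natrM ler_nat.
Qed.

Lemma ler_pdivrMr_nat (x y z : nat) : (0 < z)%N ->
  (x%:R / z%:R <= y%:R :> rat) = (x <= y * z)%N.
Proof. by move=> z0; rewrite ler_pdivrMr ?ltr0n // -natrM ler_nat. Qed.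

Lemma ler_pdivlMr_nat (x y z : nat) : (0 < z)%N ->
  (y%:R <= x%:R / z%:R :> rat) = (y * z <= x)%N.
Proof. by move=> z0; rewrite ler_pdivlMr ?ltr0n // -natrM ler_nat. Qed.

Lemma sum_threshold (n c : nat) :
  \sum_(j < n) (if (c <= j)%N then 1 else 0) = (n - c)%:R :> rat.
Proof.
elim: n => [|n IHn]; first by rewrite big_ord0 sub0n.
rewrite big_ord_recr /= IHn; case: leqP => cn; last by rewrite addr0; congr _%:R; lia.
by rewrite subSn // -natr1.
Qed.

Lemma sum_ord_pred1 (R : nmodType) (n m : nat) (F : nat -> R) :
  \sum_(j < n | nat_of_ord j == m) F j = if (m < n)%N then F m else 0.
Proof.
case: ltnP => mn; first by rewrite (big_pred1 (Ordinal mn)) // => j; rewrite -val_eqE.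
by rewrite big_pred0 // => j; rewrite ltn_eqF // (leq_trans (ltn_ord j)).
Qed.

Lemma sum_powerset_pivot (R : pzSemiRingType) (T : finType) (A : {set T})
    (c : nat -> R) (m : nat) :
  \sum_(U in powerset A) c #|U| * (if #|U| == m then 1 else 0) =
  if (m <= #|A|)%N then c m *+ 'C(#|A|, m) else 0.
Proof.
rewrite (sum_powerset_card _ (fun j => c j * (if j == m then 1 else 0))).
rewrite (eq_bigr (fun j : 'I__ => if nat_of_ord j == m then c j *+ 'C(#|A|, j) else 0)).
  by rewrite -big_mkcond (sum_ord_pred1 _ _ (fun j => c j *+ 'C(#|A|, j))).
by move=> j _; case: eqP => _; rewrite ?mulr1 // mulr0 mul0rn.
Qed.

Lemma threshold_succ (h n : nat) : (0 < h)%N ->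
  (if (h <= n.+1)%N then 1 else 0) - (if (h <= n)%N then 1 else 0) =
  (if n == h.-1 then 1 else 0) :> rat.
Proof.
move=> h0; case: (ltngtP n h.-1) => [lt|gt|->].
- by rewrite !ifF ?subrr //; apply/negbTE; rewrite -ltnNge; lia.
- by rewrite !ifT ?subrr //; lia.
- by rewrite prednK // leqnn ifF ?subr0 //; apply/negbTE; rewrite -ltnNge; lia.
Qed.

Definition shapley_coef (s u : nat) : rat := (u`! * (s - u - 1)`!)%:R / s`!%:R.

Lemma shapley_coef_bin (n j : nat) : (j <= n)%N ->
  shapley_coef n.+1 j *+ 'C(n, j) = 1 / n.+1%:R.
Proof.
move=> jn; rewrite /shapley_coef -[_ *+ _]mulr_natr mulrAC -natrM.
apply: (@eqr_div_nat _ _ 1); rewrite ?fact_gt0 //.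
have -> : (n.+1 - j - 1 = n - j)%N by lia.
have := bin_fact jn; rewrite factS; nia.
Qed.

Lemma shapley_coef_bin_left (n j : nat) : (j <= n)%N ->
  shapley_coef n.+2 j *+ 'C(n, j) = (n.+1 - j)%:R / (n.+1 * n.+2)%:R.
Proof.
move=> jn; rewrite /shapley_coef -[_ *+ _]mulr_natr mulrAC -natrM.
apply: eqr_div_nat; rewrite ?fact_gt0 //.
have -> : (n.+2 - j - 1 = (n - j).+1)%N by lia.
have := bin_fact jn; rewrite !factS; nia.
Qed.

Lemma shapley_coef_bin_right (n j : nat) : (j <= n)%N ->
  shapley_coef n.+2 j.+1 *+ 'C(n, j) = j.+1%:R / (n.+1 * n.+2)%:R.
Proof.
move=> jn; rewrite /shapley_coef -[_ *+ _]mulr_natr mulrAC -natrM.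
apply: eqr_div_nat; rewrite ?fact_gt0 //.
have -> : (n.+2 - j.+1 - 1 = n - j)%N by lia.
have := bin_fact jn; rewrite !factS; nia.
Qed.

Section ThresholdGame.
Variables (T : finType) (w : T -> nat) (h : nat).

Lemma shapleyE (S : {set T}) (i : T) : shapley w h S i =
  \sum_(U in powerset (S :\ i)) shapley_coef #|S| #|U| * (rho w h (i |: U) - rho w h U).
Proof. by []. Qed.

Lemma rho_setU1 (U : {set T}) (i : T) : rho w h U <= rho w h (i |: U).
Proof.
have [iU|iU] := boolP (i \in U); first by rewrite (setUidPr _) ?sub1set.
rewrite /rho big_setU1 //=; case: ifP => [hU|_]; last by case: ifP.
by rewrite (leq_trans hU (leq_addl _ _)).
Qed.

Lemma shapley_ge0 (S : {set T}) (i : T) : 0 <= shapley w h S i.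
Proof.
apply: sumr_ge0 => U _; apply: mulr_ge0; first by rewrite divr_ge0 ?ler0n.
by rewrite subr_ge0 rho_setU1.
Qed.

Lemma shapley_set1 (i : T) : (w i < h)%N -> shapley w h [set i] i = 0.
Proof.
move=> wih; rewrite shapleyE setDv powerset0 big_set1 setU0 /rho big_set1 big_set0.
by rewrite leqNgt wih /= ltn_geF ?(leq_ltn_trans _ wih) // subrr mulr0.
Qed.

Lemma stake_unit (U : {set T}) : {in U, forall j, w j = 1%N} ->
  (\sum_(j in U) w j)%N = #|U|.
Proof. by move=> U1; rewrite -sum1_card; apply: eq_bigr. Qed.

Lemma rho_unit_pivotal (U : {set T}) (i : T) : (0 < h)%N -> w i = 1%N -> i \notin U ->
  rho w h (i |: U) - rho w h U = if (\sum_(j in U) w j)%N == h.-1 then 1 else 0.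
Proof. by move=> h0 wi1 iU; rewrite /rho big_setU1 //= wi1 add1n threshold_succ. Qed.

Lemma shapley_among_unit (S : {set T}) (i : T) : i \in S ->
  {in S :\ i, forall j, w j = 1%N} ->
  shapley w h S i = ((#|S| - (h - w i)) - (#|S| - h))%N%:R / #|S|%:R.
Proof.
move=> iS others1.
have cS : #|S| = #|S :\ i|.+1 by rewrite (cardsD1 i S) iS.
pose g j : rat := (if (h - w i <= j)%N then 1 else 0) - (if (h <= j)%N then 1 else 0).
have marginal (U : {set T}) : U \subset S :\ i -> rho w h (i |: U) - rho w h U = g #|U|.
  move=> US; have iU : i \notin U by apply/negP => /(subsetP US); rewrite setD11.
  have U1 : {in U, forall j, w j = 1%N} by move=> j /(subsetP US) /others1.
  by rewrite /rho big_setU1 //= stake_unit // /g leq_subLR.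
rewrite shapleyE (eq_bigr (fun U : {set T} => shapley_coef #|S| #|U| * g #|U|)); last first.
  by move=> U; rewrite powersetE => /marginal ->.
rewrite (sum_powerset_card _ (fun j => shapley_coef #|S| j * g j)) cS.
rewrite (eq_bigr (fun j : 'I__ => g j / #|S :\ i|.+1%:R)); last first.
  move=> j _; rewrite -mulrnAl shapley_coef_bin; last by rewrite -ltnS.
  by rewrite mul1r mulrC.
by rewrite -mulr_suml sumrB !sum_threshold -cS -natrB // leq_sub2l // leq_subr.
Qed.

Lemma shapley_beside_large (S : {set T}) (i L : T) :
  i \in S -> L \in S -> i != L -> {in S :\ L, forall j, w j = 1%N} -> (w L < h)%N ->
  shapley w h S i =
    ((#|S| - h) + (if h - w L < #|S| then h - w L else 0))%N%:R / (#|S|.-1 * #|S|)%:R.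
Proof.
move=> iS LS iL others1 wLh; set D := S :\ i :\ L.
have h0 : (0 < h)%N := leq_ltn_trans (leq0n _) wLh.
have wi1 : w i = 1%N by apply: others1; rewrite in_setD1 iL.
have D1 : {in D, forall j, w j = 1%N}.
  by move=> j /setD1P[jL /setD1P[_ jS]]; apply: others1; rewrite in_setD1 jL.
have LSi : L \in S :\ i by rewrite in_setD1 eq_sym iL.
have cS : #|S| = #|D|.+2 by rewrite (cardsD1 i S) iS (cardsD1 L (S :\ i)) LSi.
have notin_sub (x : T) (U : {set T}) : U \subset D -> x \notin D -> x \notin U.
  by move=> UD; apply: contra; apply: (subsetP UD).
have iD : i \notin D by rewrite !in_setD1 eqxx andbF.
have LD : L \notin D by rewrite in_setD1 eqxx.
have marginal (U : {set T}) : U \subset D ->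
    rho w h (i |: U) - rho w h U = if #|U| == h.-1 then 1 else 0.
  move=> UD; rewrite rho_unit_pivotal ?(notin_sub _ _ UD iD) //.
  by rewrite stake_unit => // j /(subsetP UD)/D1.
have marginal_large (U : {set T}) : U \subset D ->
    rho w h (i |: (L |: U)) - rho w h (L |: U) = if #|U| == (h - w L).-1 then 1 else 0.
  move=> UD; rewrite rho_unit_pivotal //; last first.
    by rewrite in_setU1 negb_or iL (notin_sub _ _ UD iD).
  rewrite big_setU1 ?(notin_sub _ _ UD LD) //= stake_unit => [|j /(subsetP UD)/D1 //].
  by congr (if _ then _ else _); apply/eqP/eqP; lia.
rewrite shapleyE -(setD1K LSi) sum_powersetU1 //.
rewrite (eq_bigr (fun U : {set T} =>
  shapley_coef #|S| #|U| * (if #|U| == h.-1 then 1 else 0))); last first.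
  by move=> U; rewrite powersetE => /marginal ->.
rewrite [X in _ + X](eq_bigr (fun U : {set T} =>
  shapley_coef #|S| #|U|.+1 * (if #|U| == (h - w L).-1 then 1 else 0))); last first.
  move=> U; rewrite powersetE => UD.
  by rewrite marginal_large // cardsU1 (notin_sub _ _ UD LD).
rewrite sum_powerset_pivot (sum_powerset_pivot _ (fun j => shapley_coef #|S| j.+1)).
rewrite -/D cS; set N := #|D|; rewrite natrD mulrDl; congr (_ + _).
  case: leqP => hN; last by rewrite (_ : N.+2 - h = 0)%N ?mul0r //; lia.
  by rewrite shapley_coef_bin_left //; congr (_%:R / _); lia.
have -> : ((h - w L).-1 <= N)%N = (h - w L < N.+2)%N by lia.
case: ifP => hN; last by rewrite mul0r.
by rewrite shapley_coef_bin_right ?prednK ?subn_gt0 //; lia.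
Qed.
End ThresholdGame.

Section KLPartition.
Variables (T : finType) (w : T -> nat) (L : T) (h a k l : nat) (P : {set {set T}}).
Hypotheses (wL : w L = a) (w_small : forall i, i != L -> w i = 1%N).
Hypotheses (a_lt_h : (a < h)%N) (h_le_ka : (h <= k + a)%N) (k_lt_h : (k < h)%N).
Hypotheses (h_lt_l : (h < l)%N) (klP : kl_partition L k l P).

Lemma kl_pblock_mem (i : T) : pblock P i \in P.
Proof. by case: klP => /and3P[/eqP coverP _ _] _; rewrite pblock_mem // coverP. Qed.

Lemma kl_mem_pblock (i : T) : i \in pblock P i.
Proof. by case: klP => /and3P[/eqP coverP _ _] _; rewrite mem_pblock coverP. Qed.

Lemma kl_pblock_large (S : {set T}) : S \in P -> L \in S -> S = pblock P L.
Proof. by case: klP => /and3P[_ trivP _] _ SP LS; rewrite (def_pblock trivP SP LS). Qed.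

Lemma kl_card_large (S : {set T}) : S \in P -> L \in S -> #|S| = k.+1.
Proof. by case: klP => _ types SP LS; move: (types S SP); rewrite LS /= orbF => /eqP. Qed.

Lemma kl_card_small (S : {set T}) : S \in P -> L \notin S -> (l.-1 <= #|S| <= l)%N.
Proof.
case: klP => _ types SP LS; move: (types S SP); rewrite (negbTE LS) /=.
by case/orP=> /eqP ->; rewrite ?leqnn ?leq_pred.
Qed.

Lemma unit_notin_large (S : {set T}) : L \notin S -> {in S, forall j, w j = 1%N}.
Proof. by move=> LS j jS; apply: w_small; apply: contraNneq LS => <-. Qed.

Lemma unit_setD1_large (S : {set T}) : {in S :\ L, forall j, w j = 1%N}.
Proof. by move=> j /setD1P[jL _]; apply: w_small. Qed.

Lemma kl_rho (S : {set T}) : S \in P -> rho w h S = 1.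
Proof.
move=> SP; rewrite /rho; have [LS|LS] := boolP (L \in S).
  rewrite (big_setD1 L LS) /= wL stake_unit; last exact: unit_setD1_large.
  by move: (cardsD1 L S); rewrite LS kl_card_large // => cS; rewrite ifT //; lia.
rewrite stake_unit; last exact: unit_notin_large.
move: (kl_card_small SP LS) => cS.
by rewrite ifT //; lia.
Qed.


(* Conditions (1) and (2) with denominators cleared; [cond1_hi_last] is the
   upper bound of (1) in the case k = h - 1. *)
Hypothesis cond1_lo : (k * k.+1 <= l * (h - a))%N.
Hypothesis cond1_hi : (k.+2 <= h)%N -> (l * (h - a) <= k.+1 * k.+2)%N.
Hypothesis cond1_hi_last : k.+1 = h -> (l * (h.+1 - a) <= k.+1 * k.+2)%N.
Hypothesis cond2 : (a * k.+1 <= l * (k.+1 + a - h))%N.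

Lemma kl_large_stays (S : {set T}) : S \in P -> L \notin S ->
  shapley w h (L |: S) L <= shapley w h (pblock P L) L.
Proof.
move=> SP LS; move: (kl_card_small SP LS) => cS.
rewrite (shapley_among_unit h (setU11 L S) (@unit_setD1_large _)).
rewrite (shapley_among_unit h (kl_mem_pblock L) (@unit_setD1_large _)).
rewrite (kl_card_large (kl_pblock_mem L) (kl_mem_pblock L)) cardsU1 LS wL.
apply: ler_div_nat => //.
have -> : (1 + #|S| - (h - a) - (1 + #|S| - h) = a)%N by lia.
have -> : (k.+1 - (h - a) - (k.+1 - h) = k.+1 + a - h)%N by lia.
by apply: leq_trans cond2 _; rewrite mulnC leq_mul //; lia.
Qed.

Lemma shapley_small_pool (S : {set T}) (i : T) : L \notin S -> i \in S -> (h <= #|S|)%N ->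
  shapley w h S i = 1 / #|S|%:R.
Proof.
move=> LS iS hS.
rewrite (shapley_among_unit h iS) => [|j /setD1P[_ /(unit_notin_large LS)] //].
rewrite (unit_notin_large LS iS); congr (_ / _).
by apply/eqP; rewrite pnatr_eq1; lia.
Qed.

Lemma kl_shapley_join_small (S : {set T}) (i : T) :
  i != L -> S \in P -> L \notin S -> i \notin S -> shapley w h (i |: S) i = 1 / #|S|.+1%:R.
Proof.
move=> iL SP LS iS; move: (kl_card_small SP LS) => cS.
have LiS : L \notin i |: S by rewrite in_setU1 negb_or eq_sym iL.
rewrite (shapley_small_pool LiS (setU11 i S)) cardsU1 iS //; lia.
Qed.

Lemma kl_small_with_large_stays (i : T) (S : {set T}) : i != L -> L \in pblock P i ->
  S \in P -> i \notin S -> shapley w h (i |: S) i <= shapley w h (pblock P i) i.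
Proof.
move=> iL LB SP iS.
have LS : L \notin S.
  apply: contra iS => LS.
  by rewrite (kl_pblock_large SP LS) -(kl_pblock_large (kl_pblock_mem i) LB) kl_mem_pblock.
move: (kl_card_small SP LS) (kl_card_large (kl_pblock_mem i) LB) => cS cB.
rewrite kl_shapley_join_small //.
rewrite (shapley_beside_large (kl_mem_pblock i) LB iL (@unit_setD1_large _)) wL //.
rewrite cB ifT; last by lia.
apply: (@ler_div_nat 1); [by [] | by rewrite muln_gt0; lia |].
have -> : (k.+1 - h + (h - a) = h - a)%N by lia.
by rewrite mul1n; apply: leq_trans cond1_lo _; rewrite mulnC leq_mul //; lia.
Qed.

Lemma kl_small_stays (i : T) (S : {set T}) : L \notin pblock P i ->
  S \in P -> i \notin S -> shapley w h (i |: S) i <= shapley w h (pblock P i) i.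
Proof.
move=> LB SP iS.
have iL : i != L by apply: contraNneq LB => <-; apply: kl_mem_pblock.
move: (kl_card_small (kl_pblock_mem i) LB) => cB.
rewrite (shapley_small_pool LB (kl_mem_pblock i)); last by lia.
have [LS|LS] := boolP (L \in S); last first.
  move: (kl_card_small SP LS) => cS.
  rewrite kl_shapley_join_small //.
  by apply: (@ler_div_nat 1 _ 1); lia.
rewrite (shapley_beside_large (setU11 i S) (setU1r i LS) iL (@unit_setD1_large _)) wL //.
rewrite cardsU1 iS kl_card_large // ifT; last by lia.
apply: (@ler_div_nat _ _ 1); [by rewrite muln_gt0 | by lia | rewrite mul1n].
have [hk|hk] := leqP k.+2 h.
  have -> : (1 + k.+1 - h + (h - a) = h - a)%N by lia.
  by apply: leq_trans (cond1_hi hk); rewrite mulnC leq_mul //; lia.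
have -> : (1 + k.+1 - h + (h - a) = h.+1 - a)%N by lia.
by apply: leq_trans (cond1_hi_last _); [rewrite mulnC leq_mul //; lia | lia].
Qed.

Lemma kl_alone_stays (i : T) : shapley w h [set i] i <= shapley w h (pblock P i) i.
Proof.
rewrite shapley_set1 ?shapley_ge0 //.
by have [->|iL] := eqVneq i L; [rewrite wL | rewrite w_small //]; lia.
Qed.

Lemma kl_partition_nash : nash_equilibrium w h P.
Proof.
split; [by case: klP | exact: kl_rho | move=> i; split; last exact: kl_alone_stays].
move=> S SP iS; have [iL|iL] := eqVneq i L; first by subst i; apply: kl_large_stays.
have [LB|LB] := boolP (L \in pblock P i).
- exact: kl_small_with_large_stays.
- exact: kl_small_stays.
Qed.
End KLPartition.

Theorem lemma3p9 (T : finType) (w : T -> nat) (L : T) (h a k l : nat)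
  (Ha : (2 <= a)%N) (Hah : (a <= h - 1)%N)
  (HwL : w L = a) (Hw : forall i, i != L -> w i = 1%N)
  (Hka : (h <= k + a)%N) (Hl : (h.+1 <= l)%N) (Hkh : (k < h)%N)
  (P : {set {set T}}) (HP : kl_partition L k l P)
  (H1lo : (k * k.+1)%:R / (h%:R - a%:R) <= (l%:R : rat))
  (H1hi_gen : (k.+2 <= h)%N ->
              (l%:R : rat) <= (k.+1 * k.+2)%:R / (h%:R - a%:R))
  (H1hi_last : k = (h - 1)%N ->
              (l%:R : rat) <= (k.+1 * k.+2)%:R / (h%:R + 1 - a%:R))
  (H2 : (a * k.+1)%:R / (k%:R - h%:R + a%:R + 1) <= (l%:R : rat)) :
  nash_equilibrium w h P.
Proof.
have ah : (a < h)%N by lia.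
have Eha : h%:R - a%:R = (h - a)%:R :> rat by rewrite natrB // ltnW.
have Eh1a : h%:R + 1 - a%:R = (h.+1 - a)%:R :> rat by rewrite natrB ?natr1 //; lia.
have Ekha : k%:R - h%:R + a%:R + 1 = (k.+1 + a - h)%:R :> rat.
  by rewrite natrB ?natrD -?natr1; [ring | lia].
apply: (kl_partition_nash HwL Hw ah Hka Hkh Hl HP).
- by move: H1lo; rewrite Eha ler_pdivrMr_nat //; lia.
- by move=> hk; move: (H1hi_gen hk); rewrite Eha ler_pdivlMr_nat //; lia.
- move=> hk; have kh : k = (h - 1)%N by lia.
  by move: (H1hi_last kh); rewrite Eh1a ler_pdivlMr_nat //; lia.
- by move: H2; rewrite Ekha ler_pdivrMr_nat //; lia.
Qed.
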